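(* Let $P:\mathcal C^{op}\to\mathbf{Pos}$ and $Q:\mathcal D^{op}\to\mathbf{Pos}$ be doctrines and $(L,\lambda)\dashv(R,\rho)$ an adjunction in $\mathbf{IdxPos}$ with unit $\eta$ and counit $\epsilon$. Let $\square$ be the interior operator on $QL^{op}$ with $\square_X=\lambda_X\circ P(\eta_X)\circ\rho_{LX}$, let $\square QL^{op}:\mathcal C^{op}\to\mathbf{Pos}$ be the doctrine of its fixed points, $\square QL^{op}(X)=\{\alpha\in Q(LX)\mid\square_X\alpha=\alpha\}$, with inclusion $\iota:\square QL^{op}\Rightarrow QL^{op}$, and let $\rho'=(P\eta^{op})\cdot(\rho L^{op})$, with components $\rho'_X=P(\eta_X)\circ\rho_{LX}:Q(LX)\to PX$. Then the following diagram of adjunctions in $\mathbf{IdxPos}$ commutes: $(\mathrm{Id}_{\mathcal C},\lambda)\dashv(\mathrm{Id}_{\mathcal C},\rho')$ between $P$ and $\square QL^{op}$ (with $\lambda$ corestricted to $\square QL^{op}$ and $\rho'$ restricted to it) and between $P$ and $QL^{op}$; $(\mathrm{Id}_{\mathcal C},\iota)\dashv(\mathrm{Id}_{\mathcal C},\square)$ between $\square QL^{op}$ and $QL^{op}$; $(L,\iota)\dashv(R,\square\cdot(Q\epsilon^{op}))$ between $\square QL^{op}$ and $Q$ (right adjoint components $\square_{RY}\circ Q(\epsilon_Y)$); and $(L,\mathrm{id})\dashv(R,Q\epsilon^{op})$ between $QL^{op}$ and $Q$; that is, the composites of these left adjoints (respectively right adjoints) along the paths $P\to\square QL^{op}\to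 Q$, $P\to QL^{op}\to Q$, $P\to\square QL^{op}\to QL^{op}$ and $\square QL^{op}\to QL^{op}\to Q$ agree wherever they have the same source and target. Moreover, the natural transformation $\lambda:P\Rightarrow\square QL^{op}$ is componentwise surjective and $\rho':\square QL^{op}\Rightarrow P$ is componentwise injective.
   Context: A doctrine is a functor $P:\mathcal C^{op}\to\mathbf{Pos}$; for $t:X\to Y$, $P(t):PY\to PX$ is reindexing. In the 2-category $\mathbf{IdxPos}$, a 1-arrow $(F,f):P\to Q$ (with $P:\mathcal C^{op}\to\mathbf{Pos}$, $Q:\mathcal D^{op}\to\mathbf{Pos}$) is a functor $F:\mathcal C\to\mathcal D$ with a natural transformation $f:P\Rightarrow Q\circ F^{op}$; a 2-arrow $\theta:(F,f)\Rightarrow(F',f')$ is a natural transformation $\theta:F\Rightarrow F'$ with $f_X(\alpha)\le Q(\theta_X)(f'_X(\alpha))$ for all $X,\alpha$; composition of $(G,g)$ then $(F,f)$ is $(FG,(fG^{op})\cdot g)$ (components $f_{GX}\circ g_X$). An adjunction $(L,\lambda)\dashv(R,\rho)$ in $\mathbf{IdxPos}$ amounts to: $L\dashv R$ adjunction of categories with unit $\eta:\mathrm{Id}_{\mathcal C}\Rightarrow RL$ and counit $\epsilon:LR\Rightarrow\mathrm{Id}_{\mathcal D}$; natural $\lambda:P\Rightarrow QL^{op}$, $\rho:Q\Rightarrow PR^{op}$ with $\alpha\le P(\eta_X)(\rho_{LX}\lambda_X\alpha)$ and $\lambda_{RY}(\rho_Y\beta)\le Q(\epsilon_Y)(\beta)$.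 In the diagram, adjunctions whose functors are identities have identity unit and counit, and the adjunctions between $\square QL^{op}$ or $QL^{op}$ and $Q$ have unit $\eta$ and counit $\epsilon$. An interior operator on a doctrine $M$ is a natural $\square:M\Rightarrow M$ with $\square_X\alpha\le\alpha$, $\square_X\alpha\le\square_X\square_X\alpha$. *)

From Stdlib Require Import ProofIrrelevance.

Set Implicit Arguments.
Unset Strict Implicit.

Record Category := {
  ob :> Type;
  hom : ob -> ob -> Type;
  idm : forall X : ob, hom X X;
  cmp : forall {X Y Z : ob}, hom Y Z -> hom X Y -> hom X Z;
  cmp_idl : forall (X Y : ob) (f : hom X Y), cmp (idm Y) f = f;
  cmp_idr : forall (X Y : ob) (f : hom X Y), cmp f (idm X) = f;
  cmp_assoc : forall (X Y Z W : ob) (h : hom Z W) (g : hom Y Z) (f : hom X Y),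
      cmp h (cmp g f) = cmp (cmp h g) f }.
Arguments hom {_} _ _.
Arguments idm {_} _.
Arguments cmp {_ X Y Z} _ _.

Record Poset := {
  pcar :> Type;
  ple : pcar -> pcar -> Prop;
  ple_refl : forall x, ple x x;
  ple_trans : forall x y z, ple x y -> ple y z -> ple x z;
  ple_antisym : forall x y, ple x y -> ple y x -> x = y }.
Arguments ple {_} _ _.

Definition SubPoset (p : Poset) (S : p -> Prop) : Poset.
Proof.
  refine (@Build_Poset {x : p | S x} (fun a b => ple (proj1_sig a) (proj1_sig b)) _ _ _).
  - intros [x hx]; apply ple_refl.
  - intros [x hx] [y hy] [z hz]; simpl; apply ple_trans.
  - intros [x hx] [y hy]; simpl; intros h1 h2.
    apply subset_eq_compat; apply ple_antisym; assumption.
Defined.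
Arguments SubPoset : clear implicits.

Record Functor (C D : Category) := {
  fobj :> C -> D;
  fmap : forall {X Y : C}, hom X Y -> hom (fobj X) (fobj Y);
  fmap_id : forall X : C, fmap (idm X) = idm (fobj X);
  fmap_cmp : forall (X Y Z : C) (g : hom Y Z) (f : hom X Y),
      fmap (cmp g f) = cmp (fmap g) (fmap f) }.
Arguments fobj {C D} _ _.
Arguments fmap {C D} _ {X Y} _.

Definition idF (C : Category) : Functor C C.
Proof.
  refine (@Build_Functor C C (fun X => X) (fun X Y f => f) _ _); reflexivity.
Defined.

Definition fcomp (C D E : Category) (G : Functor D E) (F : Functor C D) : Functor C E.
Proof.
  refine (@Build_Functor C E (fun X => G (F X)) (fun X Y f => fmap G (fmap F f)) _ _).
  - intros X; rewrite fmap_id; apply fmap_id.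
  - intros X Y Z g f; rewrite fmap_cmp; apply fmap_cmp.
Defined.

Record NatTrans (C D : Category) (F G : Functor C D) := {
  ntc : forall X : C, hom (F X) (G X);
  ntnat : forall (X Y : C) (f : hom X Y), cmp (fmap G f) (ntc X) = cmp (ntc Y) (fmap F f) }.
Arguments ntc {C D F G} _ _.

Definition idUnit (C : Category) : NatTrans (idF C) (fcomp (idF C) (idF C)).
Proof.
  refine (@Build_NatTrans C C (idF C) (fcomp (idF C) (idF C)) (fun X : C => idm X : hom X X) _).
  intros X Y f; simpl; rewrite cmp_idl, cmp_idr; reflexivity.
Defined.

Definition idCounit (C : Category) : NatTrans (fcomp (idF C) (idF C)) (idF C).
Proof.
  refine (@Build_NatTrans C C (fcomp (idF C) (idF C)) (idF C) (fun X : C => idm X : hom X X) _).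
  intros X Y f; simpl; rewrite cmp_idl, cmp_idr; reflexivity.
Defined.

Record Doctrine (C : Category) := {
  dobj :> C -> Poset;
  dmap : forall {X Y : C}, hom X Y -> dobj Y -> dobj X;
  dmap_mono : forall (X Y : C) (t : hom X Y) (a b : dobj Y),
      ple a b -> ple (dmap t a) (dmap t b);
  dmap_id : forall (X : C) (a : dobj X), dmap (idm X) a = a;
  dmap_cmp : forall (X Y Z : C) (g : hom Y Z) (f : hom X Y) (a : dobj Z),
      dmap (cmp g f) a = dmap f (dmap g a) }.
Arguments dobj {C} _ _.
Arguments dmap {C} _ {X Y} _ _.

(** [precomp Q F] is the doctrine Q F^op *)
Definition precomp (C D : Category) (Q : Doctrine D) (F : Functor C D) : Doctrine C.
Proof.
  refine (@Build_Doctrine C (fun X => Q (F X)) (fun X Y t => dmap Q (fmap F t)) _ _ _).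
  - intros X Y t a b h; apply dmap_mono; exact h.
  - intros X a; rewrite fmap_id; apply dmap_id.
  - intros X Y Z g f a; rewrite fmap_cmp; apply dmap_cmp.
Defined.

Record DTrans (C : Category) (P Q : Doctrine C) := {
  dtc : forall X : C, P X -> Q X;
  dtc_mono : forall (X : C) (a b : P X), ple a b -> ple (dtc a) (dtc b);
  dtc_nat : forall (X Y : C) (t : hom X Y) (b : P Y),
      dtc (dmap P t b) = dmap Q t (dtc b) }.
Arguments dtc {C P Q} _ _ _.

Record Arrow1 (C D : Category) (P : Doctrine C) (Q : Doctrine D) := {
  afun : Functor C D;
  atr : DTrans P (precomp Q afun) }.
Arguments afun {C D P Q} _.
Arguments atr {C D P Q} _.

(** [acomp (F,f) (G,g)] = (G,g) followed by (F,f) = (FG, (f G^op) . g) *)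
Definition acomp (C D E : Category) (P : Doctrine C) (Q : Doctrine D) (S : Doctrine E)
  (Ff : Arrow1 Q S) (Gg : Arrow1 P Q) : Arrow1 P S.
Proof.
  refine {| afun := fcomp (afun Ff) (afun Gg);
            atr := @Build_DTrans C P (precomp S (fcomp (afun Ff) (afun Gg)))
                     (fun X a => dtc (atr Ff) (afun Gg X) (dtc (atr Gg) X a)) _ _ |}.
  - intros X a b h; apply (dtc_mono (atr Ff)), (dtc_mono (atr Gg)), h.
  - intros X Y t b. simpl.
    rewrite (dtc_nat (atr Gg)). apply (dtc_nat (atr Ff)).
Defined.

Definition is_idx_adj (C D : Category) (P : Doctrine C) (Q : Doctrine D)
  (F : Arrow1 P Q) (G : Arrow1 Q P)
  (eta : NatTrans (idF C) (fcomp (afun G) (afun F)))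
  (eps : NatTrans (fcomp (afun F) (afun G)) (idF D)) : Prop :=
  (forall X : C, cmp (ntc eps (afun F X)) (fmap (afun F) (ntc eta X)) = idm (afun F X)) /\
  (forall Y : D, cmp (fmap (afun G) (ntc eps Y)) (ntc eta (afun G Y)) = idm (afun G Y)) /\
  (forall (X : C) (a : P X),
      ple a (dmap P (ntc eta X) (dtc (atr G) (afun F X) (dtc (atr F) X a)))) /\
  (forall (Y : D) (b : Q Y),
      ple (dtc (atr F) (afun G Y) (dtc (atr G) Y b)) (dmap Q (ntc eps Y) b)).
Arguments is_idx_adj {C D P Q} F G eta eps.

Section BoxConstruction.
Context (C D : Category) (P : Doctrine C) (Q : Doctrine D)
  (L : Functor C D) (R : Functor D C)
  (eta : NatTrans (idF C) (fcomp R L)) (eps : NatTrans (fcomp L R) (idF D))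
  (lam : DTrans P (precomp Q L)) (rho : DTrans Q (precomp P R)).

Definition rhoP_c (X : C) (a : Q (L X)) : P X :=
  dmap P (ntc eta X) (dtc rho (L X) a).
Arguments rhoP_c X a : clear implicits.

Definition box_c (X : C) (a : Q (L X)) : Q (L X) := dtc lam X (rhoP_c X a).
Arguments box_c X a : clear implicits.

Lemma rhoP_mono (X : C) (a b : Q (L X)) : ple a b -> ple (rhoP_c X a) (rhoP_c X b).
Proof.
  intros h; unfold rhoP_c. apply dmap_mono. apply (dtc_mono rho). exact h.
Qed.

Lemma rhoP_nat (X Y : C) (t : hom X Y) (a : Q (L Y)) :
  rhoP_c X (dmap Q (fmap L t) a) = dmap P t (rhoP_c Y a).
Proof.
  unfold rhoP_c.
  rewrite (dtc_nat rho (fmap L t) a). simpl.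
  rewrite <- (dmap_cmp (d:=P)).
  rewrite <- (dmap_cmp (d:=P)).
  f_equal.
  exact (ntnat eta t).
Qed.

Lemma box_mono (X : C) (a b : Q (L X)) : ple a b -> ple (box_c X a) (box_c X b).
Proof. intros h; apply (dtc_mono lam), rhoP_mono, h. Qed.

Lemma box_nat (X Y : C) (t : hom X Y) (a : Q (L Y)) :
  box_c X (dmap Q (fmap L t) a) = dmap Q (fmap L t) (box_c Y a).
Proof. unfold box_c. rewrite rhoP_nat. apply (dtc_nat lam). Qed.

Lemma fix_dmap_proof (X Y : C) (t : hom X Y) (b : {a : Q (L Y) | box_c Y a = a}) :
  box_c X (dmap Q (fmap L t) (proj1_sig b)) = dmap Q (fmap L t) (proj1_sig b).
Proof. rewrite box_nat, (proj2_sig b). reflexivity. Qed.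

Definition FixD : Doctrine C.
Proof.
  refine (@Build_Doctrine C (fun X => SubPoset (Q (L X)) (fun a => box_c X a = a))
            (fun X Y t b => exist _ (dmap Q (fmap L t) (proj1_sig b)) (fix_dmap_proof t b))
            _ _ _).
  - intros X Y t [a ha] [b hb]; simpl; apply dmap_mono.
  - intros X [a ha]; apply subset_eq_compat; simpl.
    rewrite fmap_id; apply dmap_id.
  - intros X Y Z g f [a ha]; apply subset_eq_compat; simpl.
    rewrite fmap_cmp; apply dmap_cmp.
Defined.

Definition rhoFix : DTrans FixD (precomp P (idF C)).
Proof.
  refine (@Build_DTrans C FixD (precomp P (idF C)) (fun X b => rhoP_c X (proj1_sig b)) _ _).
  - intros X [a ha] [b hb] h; apply rhoP_mono, h.
  - intros X Y t [b hb]; simpl. apply rhoP_nat.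
Defined.

Definition rhoQL : DTrans (precomp Q L) (precomp P (idF C)).
Proof.
  refine (@Build_DTrans C (precomp Q L) (precomp P (idF C)) rhoP_c _ _).
  - intros X a b h; apply rhoP_mono, h.
  - intros X Y t b; apply rhoP_nat.
Defined.

Definition lamQL : DTrans P (precomp (precomp Q L) (idF C)).
Proof.
  refine (@Build_DTrans C P (precomp (precomp Q L) (idF C)) (dtc lam) _ _).
  - intros X a b h; apply (dtc_mono lam), h.
  - intros X Y t b; apply (dtc_nat lam).
Defined.

Definition iotaId : DTrans FixD (precomp (precomp Q L) (idF C)).
Proof.
  refine (@Build_DTrans C FixD (precomp (precomp Q L) (idF C))
            (fun X b => proj1_sig b) _ _).
  - intros X [a ha] [b hb] h; exact h.
  - intros X Y t [b hb]; reflexivity.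
Defined.

Definition iotaL : DTrans FixD (precomp Q L).
Proof.
  refine (@Build_DTrans C FixD (precomp Q L) (fun X b => proj1_sig b) _ _).
  - intros X [a ha] [b hb] h; exact h.
  - intros X Y t [b hb]; reflexivity.
Defined.

Definition idQL : DTrans (precomp Q L) (precomp Q L).
Proof.
  refine (@Build_DTrans C (precomp Q L) (precomp Q L) (fun X a => a) _ _).
  - intros X a b h; exact h.
  - intros X Y t b; reflexivity.
Defined.

Definition Qeps : DTrans Q (precomp (precomp Q L) R).
Proof.
  refine (@Build_DTrans D Q (precomp (precomp Q L) R)
            (fun Y b => dmap Q (ntc eps Y) b) _ _).
  - intros Y a b h; apply (dmap_mono (ntc eps Y)), h.
  - intros X Y t b; simpl. rewrite <- !(dmap_cmp (d:=Q)). f_equal.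
    exact (ntnat eps t).
Defined.

Definition LlamA : Arrow1 P Q := {| afun := L; atr := lam |}.
Definition RrhoA : Arrow1 Q P := {| afun := R; atr := rho |}.

Hypothesis H : is_idx_adj LlamA RrhoA eta eps.

Lemma box_defl (X : C) (a : Q (L X)) : ple (box_c X a) a.
Proof.
  destruct H as (T1 & T2 & U & Co).
  pose proof (Co (L X) a) as h. simpl in h.
  apply (dmap_mono (fmap L (ntc eta X))) in h.
  rewrite <- (dmap_cmp (d:=Q)) in h.
  pose proof (T1 X) as t1; simpl in t1.
  assert (ez2 : box_c X a =
      dmap Q (fmap L (ntc eta X)) (dtc lam (R (L X)) (dtc rho (L X) a)))
    by exact (dtc_nat lam (ntc eta X) (dtc rho (L X) a)).
  rewrite ez2. eapply ple_trans; [exact h|].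
  match goal with |- ple ?z _ => assert (ez : z = a) end.
  { transitivity (dmap Q (idm (L X)) a).
    - apply (f_equal (fun f => dmap Q f a)); exact t1.
    - apply dmap_id. }
  rewrite ez; apply ple_refl.
Qed.

Lemma lam_fixed (X : C) (a : P X) : box_c X (dtc lam X a) = dtc lam X a.
Proof.
  apply ple_antisym.
  - apply box_defl.
  - destruct H as (T1 & T2 & U & Co).
    apply (dtc_mono lam). exact (U X a).
Qed.

Arguments lam_fixed X a : clear implicits.

Lemma box_idem (X : C) (a : Q (L X)) : box_c X (box_c X a) = box_c X a.
Proof. apply lam_fixed. Qed.
Arguments box_idem X a : clear implicits.

Definition lamFix : DTrans P (precomp FixD (idF C)).
Proof.
  refine (@Build_DTrans C P (precomp FixD (idF C))
            (fun X a => exist _ (dtc lam X a) (lam_fixed X a)) _ _).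
  - intros X a b h; apply (dtc_mono lam), h.
  - intros X Y t b; apply subset_eq_compat; apply (dtc_nat lam).
Defined.

Definition boxFix : DTrans (precomp Q L) (precomp FixD (idF C)).
Proof.
  refine (@Build_DTrans C (precomp Q L) (precomp FixD (idF C))
            (fun X a => exist _ (box_c X a) (box_idem X a)) _ _).
  - intros X a b h; apply box_mono, h.
  - intros X Y t b; apply subset_eq_compat; apply box_nat.
Defined.

Definition boxEps : DTrans Q (precomp FixD R).
Proof.
  refine (@Build_DTrans D Q (precomp FixD R)
            (fun Y b => exist _ (box_c (R Y) (dmap Q (ntc eps Y) b))
                              (box_idem (R Y) (dmap Q (ntc eps Y) b))) _ _).
  - intros Y a b h; apply box_mono, dmap_mono, h.
  - intros X Y t b; apply subset_eq_compat; simpl.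
    rewrite <- box_nat. f_equal. exact (dtc_nat Qeps t b).
Defined.

Definition A_P_Fix : Arrow1 P FixD := {| afun := idF C; atr := lamFix |}.
Definition A_P_QL : Arrow1 P (precomp Q L) := {| afun := idF C; atr := lamQL |}.
Definition A_Fix_QL : Arrow1 FixD (precomp Q L) := {| afun := idF C; atr := iotaId |}.
Definition A_Fix_Q : Arrow1 FixD Q := {| afun := L; atr := iotaL |}.
Definition A_QL_Q : Arrow1 (precomp Q L) Q := {| afun := L; atr := idQL |}.
Definition B_Fix_P : Arrow1 FixD P := {| afun := idF C; atr := rhoFix |}.
Definition B_QL_P : Arrow1 (precomp Q L) P := {| afun := idF C; atr := rhoQL |}.
Definition B_QL_Fix : Arrow1 (precomp Q L) FixD := {| afun := idF C; atr := boxFix |}.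
Definition B_Q_Fix : Arrow1 Q FixD := {| afun := R; atr := boxEps |}.
Definition B_Q_QL : Arrow1 Q (precomp Q L) := {| afun := R; atr := Qeps |}.

End BoxConstruction.

From Stdlib Require Import ProofIrrelevance.

Set Implicit Arguments.

(* Over identity functors an adjunction in IdxPos is a componentwise Galois
   connection.  The unit inequality of (L,lam) -| (R,rho) says a <= rho' (lam a),
   and the counit inequality transported along L eta (first triangle identity)
   says box a <= a; so lam -| rho' componentwise, box = lam rho' is an interior
   operator, and rho' box = rho'.  A fixed point b of box is lam (rho' b), which
   gives surjectivity of lam and injectivity of rho' on fixed points; the second
   triangle identity gives rho' (Q eps b) = rho b, which makes the right adjoints
   commute, while the left adjoints commute on the nose. *)

Lemma fcomp_idl (C D : Category) (F : Functor C D) : fcomp (idF D) F = F.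
Proof. destruct F; unfold fcomp; simpl; f_equal; apply proof_irrelevance. Qed.

Lemma fcomp_idr (C D : Category) (F : Functor C D) : fcomp F (idF C) = F.
Proof. destruct F; unfold fcomp; simpl; f_equal; apply proof_irrelevance. Qed.

Lemma is_idx_adj_id (C : Category) (P Q : Doctrine C)
  (f : DTrans P (precomp Q (idF C))) (g : DTrans Q (precomp P (idF C))) :
  (forall (X : C) (a : P X), ple a (dtc g X (dtc f X a))) ->
  (forall (X : C) (b : Q X), ple (dtc f X (dtc g X b)) b) ->
  is_idx_adj {| afun := idF C; atr := f |} {| afun := idF C; atr := g |}
    (idUnit C) (idCounit C).
Proof.
  intros unit counit; repeat split; intros; simpl.
  - apply cmp_idl.
  - apply cmp_idl.
  - rewrite dmap_id; apply unit.
  - rewrite dmap_id; apply counit.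
Qed.

Section InteriorOperator.
Variables (C D : Category) (P : Doctrine C) (Q : Doctrine D)
  (L : Functor C D) (R : Functor D C)
  (eta : NatTrans (idF C) (fcomp R L)) (eps : NatTrans (fcomp L R) (idF D))
  (lam : DTrans P (precomp Q L)) (rho : DTrans Q (precomp P R)).
Hypothesis H : is_idx_adj (LlamA lam) (RrhoA rho) eta eps.

Local Notation box := (box_c eta lam rho).
Local Notation rho' := (rhoP_c eta rho).

Lemma triangle_L (X : C) : cmp (ntc eps (L X)) (fmap L (ntc eta X)) = idm (L X).
Proof. apply H. Qed.

Lemma triangle_R (Y : D) : cmp (fmap R (ntc eps Y)) (ntc eta (R Y)) = idm (R Y).
Proof. apply H. Qed.

Lemma lam_unit (X : C) (a : P X) : ple a (rho' (dtc lam X a)).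
Proof. apply H. Qed.

Lemma dmap_eta_eps (X : C) (a : Q (L X)) :
  dmap Q (fmap L (ntc eta X)) (dmap Q (ntc eps (L X)) a) = a.
Proof. rewrite <- dmap_cmp, triangle_L. apply dmap_id. Qed.

Lemma rhoP_Qeps (Y : D) (b : Q Y) : rho' (dmap Q (ntc eps Y) b) = dtc rho Y b.
Proof.
  pose proof (dtc_nat rho (ntc eps Y) b) as rho_nat; simpl in rho_nat.
  unfold rhoP_c; simpl. rewrite rho_nat, <- dmap_cmp.
  transitivity (dmap P (idm (R Y)) (dtc rho Y b)).
  - f_equal. apply triangle_R.
  - apply dmap_id.
Qed.

Lemma rhoP_box (X : C) (a : Q (L X)) : rho' (box a) = rho' a.
Proof.
  apply ple_antisym.
  - apply rhoP_mono, (box_defl H).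
  - apply lam_unit.
Qed.

Lemma dmap_eta_box_eps (X : C) (a : Q (L X)) :
  dmap Q (fmap L (ntc eta X)) (box (dmap Q (ntc eps (L X)) a)) = box a.
Proof. rewrite <- box_nat, dmap_eta_eps. reflexivity. Qed.

Lemma adj_P_Fix : is_idx_adj (A_P_Fix H) (B_Fix_P eta lam rho) (idUnit C) (idCounit C).
Proof.
  apply is_idx_adj_id.
  - intros X a. apply lam_unit.
  - intros X [b fixed_b]. change (ple (box b) b). rewrite fixed_b. apply ple_refl.
Qed.

Lemma adj_P_QL : is_idx_adj (A_P_QL lam) (B_QL_P eta rho) (idUnit C) (idCounit C).
Proof.
  apply is_idx_adj_id.
  - intros X a. apply lam_unit.
  - intros X b. apply (box_defl H).
Qed.

Lemma adj_Fix_QL : is_idx_adj (A_Fix_QL eta lam rho) (B_QL_Fix H) (idUnit C) (idCounit C).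
Proof.
  apply is_idx_adj_id.
  - intros X [b fixed_b]. change (ple b (box b)). rewrite fixed_b. apply ple_refl.
  - intros X b. apply (box_defl H).
Qed.

Lemma adj_Fix_Q : is_idx_adj (A_Fix_Q eta lam rho) (B_Q_Fix H) eta eps.
Proof.
  split; [exact triangle_L|]. split; [exact triangle_R|]. split.
  - intros X [b fixed_b]. change (ple b (dmap Q (fmap L (ntc eta X)) (box (dmap Q (ntc eps (L X)) b)))).
    rewrite dmap_eta_box_eps, fixed_b. apply ple_refl.
  - intros Y b. apply (box_defl H).
Qed.

Lemma adj_QL_Q : is_idx_adj (A_QL_Q Q L) (B_Q_QL Q eps) eta eps.
Proof.
  split; [exact triangle_L|]. split; [exact triangle_R|]. split.
  - intros X a. change (ple a (dmap Q (fmap L (ntc eta X)) (dmap Q (ntc eps (L X)) a))).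
    rewrite dmap_eta_eps. apply ple_refl.
  - intros Y b. apply ple_refl.
Qed.

Lemma lamFix_surjective (X : C) (b : FixD eta lam rho X) :
  exists a : P X, dtc (lamFix H) X a = b.
Proof.
  destruct b as [b fixed_b]. exists (rho' b).
  apply subset_eq_compat. exact fixed_b.
Qed.

Lemma rhoFix_injective (X : C) (b1 b2 : FixD eta lam rho X) :
  dtc (rhoFix eta lam rho) X b1 = dtc (rhoFix eta lam rho) X b2 -> b1 = b2.
Proof.
  destruct b1 as [b1 fixed_b1], b2 as [b2 fixed_b2]. simpl. intros same_rho'.
  apply subset_eq_compat. rewrite <- fixed_b1, <- fixed_b2.
  unfold box_c. f_equal. exact same_rho'.
Qed.

End InteriorOperator.

Theorem theorem7p6 (C D : Category) (P : Doctrine C) (Q : Doctrine D)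
  (L : Functor C D) (R : Functor D C)
  (eta : NatTrans (idF C) (fcomp R L)) (eps : NatTrans (fcomp L R) (idF D))
  (lam : DTrans P (precomp Q L)) (rho : DTrans Q (precomp P R))
  (H : is_idx_adj (LlamA lam) (RrhoA rho) eta eps) :
  (* ---- the five adjunctions of the diagram ---- *)
  (* (Id, lam) -| (Id, rho') between P and box Q L^op *)
  is_idx_adj (A_P_Fix H) (B_Fix_P eta lam rho) (idUnit C) (idCounit C) /\
  (* (Id, lam) -| (Id, rho') between P and Q L^op *)
  is_idx_adj (A_P_QL lam) (B_QL_P eta rho) (idUnit C) (idCounit C) /\
  (* (Id, iota) -| (Id, box) between box Q L^op and Q L^op *)
  is_idx_adj (A_Fix_QL eta lam rho) (B_QL_Fix H) (idUnit C) (idCounit C) /\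
  (* (L, iota) -| (R, box . Q eps^op) between box Q L^op and Q *)
  is_idx_adj (A_Fix_Q eta lam rho) (B_Q_Fix H) eta eps /\
  (* (L, id) -| (R, Q eps^op) between Q L^op and Q *)
  is_idx_adj (A_QL_Q Q L) (B_Q_QL Q eps) eta eps /\
  (* ---- commutativity: left adjoints ---- *)
  (* P -> box Q L^op -> Q  equals  P -> Q *)
  (afun (acomp (A_Fix_Q eta lam rho) (A_P_Fix H)) = afun (LlamA lam) /\
   forall (X : C) (a : P X),
     dtc (atr (acomp (A_Fix_Q eta lam rho) (A_P_Fix H))) X a = dtc (atr (LlamA lam)) X a) /\
  (* P -> Q L^op -> Q  equals  P -> Q *)
  (afun (acomp (A_QL_Q Q L) (A_P_QL lam)) = afun (LlamA lam) /\
   forall (X : C) (a : P X),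
     dtc (atr (acomp (A_QL_Q Q L) (A_P_QL lam))) X a = dtc (atr (LlamA lam)) X a) /\
  (* P -> box Q L^op -> Q L^op  equals  P -> Q L^op *)
  (afun (acomp (A_Fix_QL eta lam rho) (A_P_Fix H)) = afun (A_P_QL lam) /\
   forall (X : C) (a : P X),
     dtc (atr (acomp (A_Fix_QL eta lam rho) (A_P_Fix H))) X a = dtc (atr (A_P_QL lam)) X a) /\
  (* box Q L^op -> Q L^op -> Q  equals  box Q L^op -> Q *)
  (afun (acomp (A_QL_Q Q L) (A_Fix_QL eta lam rho)) = afun (A_Fix_Q eta lam rho) /\
   forall (X : C) (b : FixD eta lam rho X),
     dtc (atr (acomp (A_QL_Q Q L) (A_Fix_QL eta lam rho))) X b
     = dtc (atr (A_Fix_Q eta lam rho)) X b) /\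
  (* ---- commutativity: right adjoints ---- *)
  (* Q -> box Q L^op -> P  equals  Q -> P *)
  (afun (acomp (B_Fix_P eta lam rho) (B_Q_Fix H)) = afun (RrhoA rho) /\
   forall (Y : D) (b : Q Y),
     dtc (atr (acomp (B_Fix_P eta lam rho) (B_Q_Fix H))) Y b = dtc (atr (RrhoA rho)) Y b) /\
  (* Q -> Q L^op -> P  equals  Q -> P *)
  (afun (acomp (B_QL_P eta rho) (B_Q_QL Q eps)) = afun (RrhoA rho) /\
   forall (Y : D) (b : Q Y),
     dtc (atr (acomp (B_QL_P eta rho) (B_Q_QL Q eps))) Y b = dtc (atr (RrhoA rho)) Y b) /\
  (* Q L^op -> box Q L^op -> P  equals  Q L^op -> P *)
  (afun (acomp (B_Fix_P eta lam rho) (B_QL_Fix H)) = afun (B_QL_P eta rho) /\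
   forall (X : C) (a : Q (L X)),
     dtc (atr (acomp (B_Fix_P eta lam rho) (B_QL_Fix H))) X a = dtc (atr (B_QL_P eta rho)) X a) /\
  (* Q -> Q L^op -> box Q L^op  equals  Q -> box Q L^op *)
  (afun (acomp (B_QL_Fix H) (B_Q_QL Q eps)) = afun (B_Q_Fix H) /\
   forall (Y : D) (b : Q Y),
     dtc (atr (acomp (B_QL_Fix H) (B_Q_QL Q eps))) Y b = dtc (atr (B_Q_Fix H)) Y b) /\
  (* ---- lam : P => box Q L^op is componentwise surjective ---- *)
  (forall (X : C) (b : FixD eta lam rho X),
     exists a : P X, dtc (atr (A_P_Fix H)) X a = b) /\
  (* ---- rho' : box Q L^op => P is componentwise injective ---- *)
  (forall (X : C) (b1 b2 : FixD eta lam rho X),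
     dtc (atr (B_Fix_P eta lam rho)) X b1 = dtc (atr (B_Fix_P eta lam rho)) X b2 -> b1 = b2).
Proof.
  refine (conj (adj_P_Fix H) (conj (adj_P_QL H) (conj (adj_Fix_QL H)
            (conj (adj_Fix_Q H) (conj (adj_QL_Q H) _))))).
  repeat apply conj.
  - exact (fcomp_idr L).
  - reflexivity.
  - exact (fcomp_idr L).
  - reflexivity.
  - exact (fcomp_idl (idF C)).
  - reflexivity.
  - exact (fcomp_idr L).
  - reflexivity.
  - exact (fcomp_idl R).
  - intros Y b. exact (eq_trans (rhoP_box H _ _) (rhoP_Qeps H Y b)).
  - exact (fcomp_idl R).
  - exact (rhoP_Qeps H).
  - exact (fcomp_idl (idF C)).
  - exact (rhoP_box H).
  - exact (fcomp_idl R).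
  - reflexivity.
  - exact (lamFix_surjective H).
  - intros X b1 b2. apply rhoFix_injective.
Qed.
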